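(* Let $R=DV$ be any decomposition of the boundary matrix of the cone filtration, and let $\sigma\in K$ and $\omega*\tau$ ($\tau\in K$) form a persistence pair, $\operatorname{low}R[\omega*\tau]=\sigma$, with $d=\min\sigma>b=\max\tau$. Let $c=V[\omega*\tau]\cap(\omega*K\setminus K)+V[\omega*\tau]\cap K_{\ge b}$ (the part of $V[\omega*\tau]$ on cone simplices and $\omega$, plus the part on base simplices in $K_{\ge b}$), and let $z=\partial c$. Then $z$ is a cycle supported in $K[b,d]=K_{\ge b}\cap K_{\le d}$ (so $[z]\in H(K[b,d])$), and $\sigma\in z$ and $\tau\in z$.
   Context: Coefficients are in a field $\mathbb F$. Let $K$ be a finite $\Delta$-complex in which every simplex $\sigma$ carries an integer interval $T(\sigma)=[\min\sigma,\max\sigma]$ with $\min\sigma<\max\sigma$, such that whenever $\sigma$ is a proper face of $\tau$, $\min\sigma<\min\tau<\max\tau<\max\sigma$; assume the values $\min\sigma$ ($\sigma\in K$) are pairwise distinct and the values $\max\sigma$ are pairwise distinct. Write $K_{\le i}=\{\sigma:\min\sigma\le i\}$, $K_{\ge j}=\{\sigma:\max\sigma\ge j\}$ (subcomplexes), and $K[b,d]=K_{\ge b}\cap K_{\le d}$. The cone $\omega*K$ consists of the simplices of $K$ (''base simplices''), a new vertex $\omega$, and simplices $\omega*\sigma$ for $\sigma\in K$ (''cone simplices''), with $\partial(\omega*\sigma)=\sigma-\omega*\partial\sigma$ (for a vertex $v$, $\partial(\omega*v)=v-\omega$). The cone filtration orders base simplices by increasing $\min$, then $\omega$, then the simplices $\omega*\sigma$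 by decreasing $\max\sigma$. $D$ is the boundary matrix of $\omega*K$ with rows and columns in this order; $R=DV$ denotes a decomposition with $V$ invertible upper-triangular and $R$ reduced (pivots $\operatorname{low}$ — lowest nonzero entries — of nonzero columns in distinct rows). ''$\sigma\in c$'' means the coefficient of $\sigma$ in chain $c$ is nonzero; $c\cap L$ is the restriction of chain $c$ to simplices in $L$; a chain is supported in $L$ if all its nonzero coefficients are on simplices of $L$. *)

From HB Require Import structures.
From mathcomp Require Import all_boot all_order all_algebra.
Set Implicit Arguments. Unset Strict Implicit. Unset Printing Implicit Defensive.
Import Order.TTheory GRing.Theory Num.Theory.
Local Open Scope ring_scope.

(* A finite Delta-complex K with simplices 'I_n, dimension map [dim] and
   face maps [face s i] = d_i s (the i-th face, 0 <= i <= dim s). *)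
Definition is_delta_complex (n : nat) (dim : 'I_n -> nat) (face : 'I_n -> nat -> 'I_n) : Prop :=
  (forall s i, (0 < dim s)%N -> (i <= dim s)%N -> dim (face s i) = (dim s).-1)
  /\ (forall s i j, (1 < dim s)%N -> (i < j)%N -> (j <= dim s)%N ->
        face (face s j) i = face (face s i) j.-1).

Definition facet (n : nat) (dim : 'I_n -> nat) (face : 'I_n -> nat -> 'I_n) : rel 'I_n :=
  fun s t => (0 < dim t)%N && [exists i : 'I_(dim t).+1, face t i == s].

Definition proper_face n dim face (s t : 'I_n) : Prop :=
  exists2 u, facet dim face s u & connect (facet dim face) u t.

(* Standing hypotheses on the intervals T(s) = [mn s, mx s]. *)
Definition interval_hyps n dim face (mn mx : 'I_n -> int) : Prop :=
  (forall s, mn s < mx s)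
  /\ (forall s t, proper_face dim face s t -> mn s < mn t /\ mn t < mx t /\ mx t < mx s)
  /\ injective mn /\ injective mx.

(* Simplices of the cone w*K: base simplices, the apex w, cone simplices w*s. *)
Inductive csimp (n : nat) := Base of 'I_n | Apex | Cone of 'I_n.
Arguments Apex {n}.

Definition csimp_enc n (x : csimp n) : option ('I_n + 'I_n) :=
  match x with Base s => Some (inl s) | Apex => None | Cone s => Some (inr s) end.
Definition csimp_dec n (y : option ('I_n + 'I_n)) : csimp n :=
  match y with Some (inl s) => Base s | None => Apex | Some (inr s) => Cone s end.
Lemma csimp_encK n : cancel (@csimp_enc n) (@csimp_dec n).
Proof. by case. Qed.
HB.instance Definition _ n := Finite.copy (csimp n) (can_type (@csimp_encK n)).

Definition cf_le n (mn mx : 'I_n -> int) (x y : csimp n) : bool :=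
  match x, y with
  | Base s, Base t => mn s <= mn t
  | Base _, _ => true
  | Apex, Base _ => false
  | Apex, _ => true
  | Cone s, Cone t => mx t <= mx s
  | Cone _, _ => false
  end.

Definition bdK (F : fieldType) n (dim : 'I_n -> nat) (face : 'I_n -> nat -> 'I_n)
  (s t : 'I_n) : F :=
  if dim t is 0 then 0 else \sum_(i < (dim t).+1) (-1) ^+ i * (face t i == s)%:R.

(* Boundary matrix of w*K: D x y = coefficient of x in the boundary of y, with
   d(w*s) = s - w*ds  and  d(w*v) = v - w for a vertex v. *)
Definition coneD (F : fieldType) n dim face (x y : csimp n) : F :=
  match y, x with
  | Base t, Base s => bdK F dim face s t
  | Base _, _ => 0
  | Apex, _ => 0
  | Cone t, Base s => (s == t)%:R
  | Cone t, Apex => if dim t is 0 then -1 else 0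
  | Cone t, Cone s => - bdK F dim face s t
  end.

Definition is_low (F : fieldType) n (mn mx : 'I_n -> int) (M : csimp n -> csimp n -> F) (y x : csimp n) : Prop :=
  M x y != 0 /\ forall x', M x' y != 0 -> cf_le mn mx x' x.

(* R = D V with V invertible upper-triangular and R reduced *)
Definition RDV_decomposition (F : fieldType) n dim face (mn mx : 'I_n -> int)
  (R V : csimp n -> csimp n -> F) : Prop :=
  (forall x y, R x y = \sum_w coneD F dim face x w * V w y)
  /\ (forall x y, V x y != 0 -> cf_le mn mx x y)
  /\ (forall x, V x x != 0)
  /\ (forall y1 y2 x, is_low mn mx R y1 x -> is_low mn mx R y2 x -> y1 = y2).

Definition cbd (F : fieldType) n dim face (c : csimp n -> F) : csimp n -> F :=
  fun x => \sum_w coneD F dim face x w * c w.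

From Pilot Require Import Defs.
From mathcomp Require Import all_boot all_order all_algebra.
From mathcomp Require Import ring zify.
Set Implicit Arguments. Unset Strict Implicit. Unset Printing Implicit Defensive.
Import Order.TTheory GRing.Theory Num.Theory.
Local Open Scope ring_scope.

(* Let v be the column V[w*tau] and split it as v = c + a, where a is the part
   of v on base simplices s with max s < b.  Since dv = R[w*tau] has pivot
   sigma, it lives on base simplices with min <= d; and da lives on base
   simplices with min < b, because a face r of s has min r < min s < max s.
   Hence z = dc = R[w*tau] - da lives on base simplices with min <= d, and its
   sigma-coefficient is R[sigma, w*tau] != 0.  Computed from c instead, the
   coefficient of z at a base simplex r with max r < b vanishes: the cofaces t
   of r have max t < max r < b, so they are cut away, and the cone simplex w*r
   contributes V[w*r, w*tau], which is 0 since w*r comes after w*tau in the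
   filtration.  At r = tau the same computation leaves only V[w*tau, w*tau].
   Finally z is a cycle because the boundary of the cone squares to zero. *)

Lemma sum_csimp (V : nmodType) n (f : csimp n -> V) :
  \sum_y f y = f Apex + \sum_s f (Base s) + \sum_s f (Cone s).
Proof.
pose inj (u : 'I_1 + ('I_n + 'I_n)) :=
  match u with inl _ => Apex | inr (inl s) => Base s | inr (inr s) => Cone s end.
pose proj (x : csimp n) : 'I_1 + ('I_n + 'I_n) :=
  match x with Apex => inl ord0 | Base s => inr (inl s) | Cone s => inr (inr s) end.
rewrite (reindex inj); last first.
  exists proj => [[i|[s|s]] _|[s||s] _] //=.
  by rewrite [i]ord1.
by rewrite !big_sumType big_ord1 /= addrA.
Qed.

Lemma sumr_delta (R : pzSemiRingType) (I : finType) (g : I -> R) (u : I) :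
  \sum_s g s * (s == u)%:R = g u.
Proof.
by rewrite (bigD1 u) //= eqxx mulr1 big1 ?addr0 // => s /negPf ->; rewrite mulr0.
Qed.

Lemma sum_simplicial_cancel (R : pzRingType) (m : nat) (G : nat -> nat -> R) :
  (forall i j, (i < j)%N -> (j <= m)%N -> G j i = - G i j.-1) ->
  \sum_(j < m.+1) \sum_(i < m) G j i = 0.
Proof.
move=> GN; rewrite -(big_mkord xpredT (fun j => \sum_(i < m) G j i)).
under eq_bigr => j _ do rewrite -(big_mkord xpredT (G j)).
have split_ij j : \sum_(0 <= i < m) G j i =
    \sum_(0 <= i < m) (if (i < j)%N then G j i else 0)
  + \sum_(0 <= i < m) (if (j <= i)%N then G j i else 0).
  by rewrite -big_split /=; apply: eq_bigr => i _; case: ltnP; rewrite ?addr0 ?add0r.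
under eq_bigr => j _ do rewrite split_ij.
rewrite big_split /= big_nat_recl // big_nat_recr //=.
rewrite [X in X + _ + _]big1 ?add0r; last by [].
rewrite [X in _ + (_ + X)]big1_seq ?addr0; last first.
  by move=> i; rewrite mem_index_iota => /and3P[_ _ im]; rewrite leqNgt im.
rewrite [X in _ + X]exchange_big_nat /= addrC; apply/eqP; rewrite addr_eq0; apply/eqP.
rewrite -sumrN; apply: eq_big_nat => k /andP[_ km]; rewrite -sumrN.
apply: eq_big_nat => i /andP[_ im]; rewrite ltnS.
by case: leqP => ik; rewrite ?oppr0 // (GN i k.+1) ?opprK.
Qed.

Section Boundary.

Variables (F : fieldType) (n : nat) (dim : 'I_n -> nat) (face : 'I_n -> nat -> 'I_n).
Local Notation bd := (bdK F dim face).

Lemma sum_bdK (g : 'I_n -> F) t : (0 < dim t)%N ->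
  \sum_s g s * bd s t = \sum_(i < (dim t).+1) (-1) ^+ i * g (face t i).
Proof.
rewrite /bdK; case: (dim t) => [//|p] _.
under eq_bigr => s _ do rewrite mulr_sumr.
rewrite exchange_big /=; apply: eq_bigr => i _.
rewrite -(sumr_delta g (face t i)) mulr_sumr; apply: eq_bigr => s _.
by rewrite eq_sym; ring.
Qed.

Lemma bdK_proper_face s t : bd s t != 0 -> proper_face dim face s t.
Proof.
rewrite /bdK; case Et: (dim t) => [|p]; first by rewrite eqxx.
have [i t_i|no_face] := pickP (fun i : 'I_p.+2 => face t i == s).
  by exists t; rewrite ?connect0 // /facet Et; apply/existsP; exists i.
by rewrite big1 ?eqxx // => i _; rewrite no_face mulr0.
Qed.

Lemma cbdB (c c' : csimp n -> F) x :
  cbd dim face (fun y => c y - c' y) x = cbd dim face c x - cbd dim face c' x.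
Proof. by rewrite /cbd -sumrB; apply: eq_bigr => w _; rewrite mulrBr. Qed.

Lemma cbd_neq0 (c : csimp n -> F) x :
  cbd dim face c x != 0 -> exists2 w, coneD F dim face x w != 0 & c w != 0.
Proof.
move=> cx; have /existsP[w /andP[Dxw cw]] :
    [exists w, (coneD F dim face x w != 0) && (c w != 0)].
  apply: contraNT cx => /existsPn none; apply/eqP/big1 => w _.
  by case/nandP: (none w) => /negbNE/eqP->; rewrite ?mul0r ?mulr0.
by exists w.
Qed.

Hypothesis HK : is_delta_complex dim face.

Lemma dim_face t i : (0 < dim t)%N -> (i < (dim t).+1)%N -> dim (face t i) = (dim t).-1.
Proof. by move=> t_pos; case: HK => dim_face _; apply: dim_face. Qed.

Lemma bdK_bdK r t : \sum_s bd r s * bd s t = 0.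
Proof.
case Et: (dim t) => [|p].
  by apply: big1 => s _; rewrite /bdK Et mulr0.
rewrite sum_bdK Et //.
case: p Et => [|q] Et.
  by apply: big1 => i _; rewrite /bdK dim_face Et ?mulr0.
under eq_bigr => i _ do rewrite /bdK dim_face Et // mulr_sumr.
apply: (@sum_simplicial_cancel _ q.+2
  (fun j i => (-1) ^+ j * ((-1) ^+ i * (face (face t j) i == r)%:R))).
move=> i [//|j] ij jm /=.
case: HK => _ ->; rewrite ?Et //.
by rewrite exprS; ring.
Qed.

(* The augmentation kills boundaries: this is the apex coefficient of dd(w*t). *)
Lemma sum_vertex_bdK t : \sum_s (dim s == 0)%:R * bd s t = 0.
Proof.
case Et: (dim t) => [|p].
  by apply: big1 => s _; rewrite /bdK Et mulr0.
rewrite sum_bdK Et //.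
under eq_bigr => i _ do rewrite dim_face Et //.
case: p {Et} => [|q]; last by rewrite big1 // => i _; rewrite mulr0.
by rewrite !big_ord_recr big_ord0 /= expr1; ring.
Qed.

Lemma coneD_coneD x w : \sum_y coneD F dim face x y * coneD F dim face y w = 0.
Proof.
rewrite sum_csimp; case: w => [t||t]; case: x => [r||r] /=.
all: try by rewrite !big1 ?mulr0 ?addr0 // => *; rewrite ?mulr0 ?mul0r.
all: rewrite mul0r add0r.
- by rewrite [X in _ + X]big1 ?addr0 ?bdK_bdK // => s _; rewrite mulr0.
- under [X in _ + X]eq_bigr => s _ do rewrite mulrC eq_sym.
  by rewrite !sumr_delta subrr.
- rewrite big1 ?add0r; last by move=> s _; rewrite mul0r.
  rewrite -[RHS](sum_vertex_bdK t); apply: eq_bigr => s _.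
  by case: (dim s) => [|k]; rewrite /= ?mulN1r ?opprK ?mul1r ?mul0r.
- rewrite big1 ?add0r; last by move=> s _; rewrite mul0r.
  by under eq_bigr => s _ do rewrite mulrNN; apply: bdK_bdK.
Qed.

Lemma cbd_cbd (c : csimp n -> F) x : cbd dim face (cbd dim face c) x = 0.
Proof.
rewrite /cbd; under eq_bigr => w _ do rewrite mulr_sumr.
rewrite exchange_big /=; apply: big1 => u _.
by under eq_bigr => w _ do rewrite mulrA; rewrite -mulr_suml coneD_coneD mul0r.
Qed.

End Boundary.

Section BaseCut.

Variables (F : fieldType) (n : nat) (dim : 'I_n -> nat) (face : 'I_n -> nat -> 'I_n).
Variables (mn mx : 'I_n -> int).
Hypothesis face_nested : forall s t, proper_face dim face s t ->
  mn s < mn t /\ mn t < mx t /\ mx t < mx s.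

Local Notation bd := (bdK F dim face).
Local Notation cbd := (cbd dim face).

Lemma bdK_mn_lt_mx s t : bd s t != 0 -> mn s < mx t.
Proof. by move/bdK_proper_face/face_nested => [st [tt _]]; apply: lt_trans tt. Qed.

Lemma bdK_mx_gt s t : bd s t != 0 -> mx t < mx s.
Proof. by move/bdK_proper_face/face_nested => [_ []]. Qed.

Definition base_cut (b : int) (v : csimp n -> F) : csimp n -> F := fun x =>
  match x with Base s => if b <= mx s then v x else 0 | _ => v x end.

Definition base_rest (b : int) (v : csimp n -> F) : csimp n -> F :=
  fun x => v x - base_cut b v x.

Lemma cbd_base_cut b v x : cbd (base_cut b v) x = cbd v x - cbd (base_rest b v) x.
Proof. by rewrite -cbdB; apply: eq_bigr => w _; rewrite opprB addrC subrK. Qed.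

Lemma cbd_base_rest_support b v x :
  cbd (base_rest b v) x != 0 -> exists2 r, x = Base r & mn r < b.
Proof.
move/cbd_neq0 => [[t||t] Dxt]; rewrite /base_rest /= ?subrr ?eqxx //.
case: ifP => [_|/negbT]; rewrite ?subrr ?eqxx // -ltNge => t_low _.
case: x Dxt => [r||r]; rewrite /= ?eqxx // => /bdK_mn_lt_mx rt.
by exists r => //; apply: lt_trans t_low.
Qed.

Lemma cbd_base_cut_above b v r :
  b <= mn r -> cbd (base_cut b v) (Base r) = cbd v (Base r).
Proof.
move=> b_r; rewrite cbd_base_cut.
have [->|/cbd_base_rest_support[_ [<-]]] :=
  eqVneq (cbd (base_rest b v) (Base r)) 0; first by rewrite subr0.
by rewrite ltNge b_r.
Qed.

Lemma cbd_base_cut_below b v r : (forall s, v (Cone s) != 0 -> b <= mx s) ->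
  mx r < b -> cbd (base_cut b v) (Base r) = 0.
Proof.
move=> v_cone; rewrite ltNge; apply: contraNeq.
case/cbd_neq0 => [[t||t]]; rewrite /= ?eqxx //.
- move=> /bdK_mx_gt tr; case: ifP => [bt _|]; last by rewrite eqxx.
  by move: bt tr; lia.
- by case: (eqVneq r t) => [<- _ /v_cone|]; rewrite ?eqxx.
Qed.

Lemma cbd_base_cut_top v t : cbd (base_cut (mx t) v) (Base t) = v (Cone t).
Proof.
rewrite /Defs.cbd sum_csimp /= mul0r add0r big1 ?add0r.
  by under eq_bigr => s _ do rewrite mulrC eq_sym; rewrite sumr_delta.
move=> s _; case: ifP => [ts|]; last by rewrite mulr0.
have [->|/bdK_mx_gt st] := eqVneq (bd t s) 0; first by rewrite mul0r.
by move: ts st; lia.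
Qed.

Lemma cbd_base_cut_support b d v x :
  (forall s, v (Cone s) != 0 -> b <= mx s) ->
  (forall y, cbd v y != 0 -> exists2 s, y = Base s & mn s <= d) ->
  b <= d ->
  cbd (base_cut b v) x != 0 -> exists2 s, x = Base s & (b <= mx s) && (mn s <= d).
Proof.
move=> v_cone v_low b_d cut_x.
have [r x_r r_d] : exists2 r, x = Base r & mn r <= d.
  move: cut_x; rewrite cbd_base_cut.
  have [->|/v_low //] := eqVneq (cbd v x) 0.
  rewrite sub0r oppr_eq0 => /cbd_base_rest_support[r -> r_b].
  by exists r => //; move: r_b b_d; lia.
rewrite {}x_r in cut_x *; exists r; rewrite // r_d andbT leNgt.
by apply: contraL cut_x => /(cbd_base_cut_below v_cone) ->; rewrite eqxx.
Qed.

End BaseCut.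

Theorem claim6p3 (F : fieldType) (n : nat) (dim : 'I_n -> nat)
  (face : 'I_n -> nat -> 'I_n) (mn mx : 'I_n -> int)
  (R V : csimp n -> csimp n -> F) (sigma tau : 'I_n) :
  is_delta_complex dim face ->
  interval_hyps dim face mn mx ->
  RDV_decomposition dim face mn mx R V ->
  is_low mn mx R (Cone tau) (Base sigma) ->
  mn sigma > mx tau ->
  let b := mx tau in
  let d := mn sigma in
  let c : csimp n -> F := fun x =>
    match x with
    | Base s => if b <= mx s then V x (Cone tau) else 0
    | _ => V x (Cone tau)
    end in
  let z := cbd dim face c in
  (forall x, cbd dim face z x = 0)
  /\ (forall x, z x != 0 -> exists2 s, x = Base s & (b <= mx s) && (mn s <= d))
  /\ z (Base sigma) != 0 /\ z (Base tau) != 0.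
Proof.
move=> HK [_ [face_nested _]] [RDV [V_upper [V_diag _]]] [R_sigma R_low] b_lt_d.
move=> b d c z; pose v x := V x (Cone tau).
have -> : z = cbd dim face (base_cut mx b v) by [].
have R_col x : cbd dim face v x = R x (Cone tau) by rewrite RDV.
split; first by move=> x; apply: cbd_cbd.
split; [|split].
- move=> x; apply: (cbd_base_cut_support face_nested); last exact: ltW.
    by move=> s /V_upper.
  by move=> [s||s]; rewrite R_col => /R_low //; exists s.
- by rewrite (cbd_base_cut_above face_nested) ?R_col // ltW.
- by rewrite (cbd_base_cut_top face_nested); apply: V_diag.
Qed.
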